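(* Let $p:[0,1]\to[0,1]$ be continuous and non-increasing, let $r$ be a positive integer and $\mathbf{g}=(g_1,\dots,g_r)\in[0,1]^r$. For $n$ a multiple of $r$ with $g_in/r$ integers, let $S\subseteq\{1,\dots,n\}$ be random with the events $\{j\in S\}$ independent and $\mathbf{P}(j\in S)=p(j/n)$, let $I_i=\{(i-1)n/r+1,\dots,in/r\}$, and let $Q_n$ be the probability that $|S\cap I_i|=g_in/r$ for every $i=1,\dots,r$. Let $\bar p_i=r\int_{(i-1)/r}^{i/r}p(u)du$. If $\frac1r\sum_{i=1}^rD(g_i\|\bar p_i)>\epsilon$ for some $\epsilon>0$, then there exist $n_0$ and a constant $b(\epsilon)>0$ such that $Q_n<e^{-b(\epsilon)n}$ for all such $n>n_0$.
   Context: $D(q\|p)=q\log\frac qp+(1-q)\log\frac{1-q}{1-p}$ is the Kullback–Leibler divergence between Bernoulli distributions with success probabilities $q$ and $p$. ($Q_n$ is the probability that the random support, viewed as a face of the weighted cross-polytope, lies in the class of faces having exactly $g_in/r$ vertex indices in the $i$-th block for each $i$.) *)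

From HB Require Import structures.
From mathcomp Require Import all_boot all_order all_algebra.
From mathcomp Require Import all_classical all_reals all_analysis.
Unset Strict Implicit. Unset Printing Implicit Defensive.
Import Order.TTheory GRing.Theory Num.Theory.
Local Open Scope ring_scope.

(* Bernoulli KL divergence D(q||p), extended-real valued, with the standard
   conventions 0 log(0/x) = 0 and a log(a/0) = +oo for a > 0. *)
Definition KLbern {R : realType} (q p : R) : \bar R :=
  ((if q == 0%R then 0%E else if p == 0%R then +oo%E else (q * ln (q / p))%:E)
   + (if q == 1%R then 0%E else if p == 1%R then +oo%E
      else ((1 - q) * ln ((1 - q) / (1 - p)))%:E))%E.

(* Elements j : 'I_n represent the indices j+1 in {1,...,n}.
   Block i : 'I_r (0-based) is I_{i+1} = {i*(n/r)+1, ..., (i+1)*(n/r)},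
   i.e. 0-based j with i*(n/r) <= j < (i+1)*(n/r). *)
Definition block (n r : nat) (i : 'I_r) : {set 'I_n} :=
  [set j : 'I_n | (i * (n %/ r) <= j) && (j < i.+1 * (n %/ r))]%N.

(* Probability that the random set S equals a given set A, when the events
   {j in S} are independent with P(j in S) = p(j/n) (j in 1..n). *)
Definition set_prob {R : realType} (p : R -> R) (n : nat) (A : {set 'I_n}) : R :=
  \prod_(j : 'I_n) (if j \in A then p ((j.+1)%:R / n%:R) else 1 - p ((j.+1)%:R / n%:R)).

Definition Qn {R : realType} (p : R -> R) (r : nat) (g : 'I_r -> R) (n : nat) : R :=
  \sum_(A : {set 'I_n} |
         [forall i : 'I_r, (#|A :&: block n r i|)%:R == g i * (n %/ r)%:R])
    set_prob p n A.

Definition pbar {R : realType} (p : R -> R) (r : nat) (i : 'I_r) : R :=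
  r%:R * Rintegral lebesgue_measure
           `[(i%:R / r%:R), (i.+1%:R / r%:R)]%classic p.

(* Since the average divergence is positive, some block i has g_i <> pbar_i.
   The number of elements of S in that block is a sum of independent
   Bernoulli variables whose mean differs from pbar_i * n/r by at most 1,
   because p is monotone and the mean is a Riemann sum of the integral
   defining pbar_i.  Hence asking for exactly g_i * n/r of them is a
   deviation of order n/r from the mean, and a Chernoff bound with tilt
   u = +-d/4 makes it exponentially unlikely. *)
From HB Require Import structures.
From mathcomp Require Import all_boot all_order all_algebra.
From mathcomp Require Import all_classical all_reals all_analysis.
From mathcomp Require Import ring lra.
Import Order.TTheory GRing.Theory Num.Theory.
Import numFieldNormedType.Exports.
Local Open Scope classical_set_scope.
Local Open Scope ring_scope.

Lemma sum_set_prod_bool {R : realType} {T : finType} (F : T -> bool -> R) :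
  \sum_(A : {set T}) \prod_(j : T) F j (j \in A) =
  \prod_(j : T) (F j true + F j false).
Proof.
under eq_bigr => j _ do rewrite -(big_bool _ (F j)).
rewrite bigA_distr_bigA /= (reindex (fun A : {set T} => [ffun x => x \in A])) /=.
  by apply: eq_bigr => A _; apply: eq_bigr => j _; rewrite ffunE.
exists (fun f : {ffun T -> bool} => [set x | f x]%SET) => [A _|f _].
  by apply/setP => x; rewrite inE ffunE.
by apply/ffunP => x; rewrite ffunE inE.
Qed.

(* Exponential tilting: weight each set A by expR (u * #|A :&: B|), sum over
   all sets with the product formula, and use 1 + x <= expR x factorwise. *)
Lemma chernoff_card_setI {R : realType} (n : nat) (ps : 'I_n -> R)
    (B : {set 'I_n}) (k u : R) (P : pred {set 'I_n}) :
  (forall j, 0 <= ps j <= 1) ->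
  (forall A, P A -> #|A :&: B|%:R = k) ->
  \sum_(A | P A) \prod_j (if j \in A then ps j else 1 - ps j)
   <= expR (- (u * k) + (expR u - 1) * \sum_(j in B) ps j).
Proof.
move=> ps01 PAk.
pose w j := if j \in B then expR u else 1.
pose t (A : {set 'I_n}) := \prod_j (if j \in A then ps j else 1 - ps j).
have t_ge0 A : 0 <= t A.
  apply: prodr_ge0 => j _; have /andP[ps0 ps1] := ps01 j.
  by case: (j \in A); rewrite ?subr_ge0.
have tilt A : t A * expR (u * #|A :&: B|%:R) =
              \prod_j (if j \in A then ps j * w j else 1 - ps j).
  rewrite mulr_natr -sumr_const expR_sum [X in _ * X]big_mkcond /= -big_split.
  apply: eq_bigr => j _; rewrite /w !inE.
  by case: (j \in A); case: (j \in B); rewrite /= ?mulr1.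
apply: (@le_trans _ _ (\sum_A t A * expR (u * #|A :&: B|%:R) * expR (- (u * k)))).
  rewrite [X in _ <= X](bigID P) /= -[X in X <= _]addr0; apply: lerD.
    by apply: ler_sum => A PA; rewrite PAk // -mulrA -expRD subrr expR0 mulr1.
  by apply: sumr_ge0 => A _; rewrite !mulr_ge0 ?expR_ge0.
under eq_bigr => A _ do rewrite tilt.
rewrite -mulr_suml (sum_set_prod_bool (fun j b => if b then ps j * w j else 1 - ps j)).
rewrite expRD mulrC; apply: ler_wpM2l; first exact: expR_ge0.
apply: (@le_trans _ _ (\prod_j expR (ps j * (w j - 1)))).
  apply: ler_prod => j _; have /andP[ps0 ps1] := ps01 j.
  apply/andP; split.
    by rewrite addr_ge0 ?subr_ge0 // mulr_ge0 // /w; case: (j \in B); rewrite ?expR_ge0.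
  by apply: le_trans (expR_ge1Dx _); rewrite /= addrCA mulrBr mulr1.
rewrite -expR_sum ler_expR mulr_sumr [in leRHS]big_mkcond /=.
by apply: ler_sum => j _; rewrite /w; case: (j \in B); rewrite ?subrr ?mulr0 // mulrC.
Qed.

Lemma chernoff_exponent_upper {R : realType} {q g d : R} :
  0 <= q -> g <= 1 -> 0 < d -> d <= 1/2 -> d <= g - q ->
  (expR (d/4) - 1) * q - (d/4) * g <= - (d^+2/8).
Proof.
move=> q0 g1 d0 d12 dgq.
set v := d/4; set E := expR v.
have v0 : 0 < v by rewrite /v divr_gt0.
have E_ge : 1 + v <= E := expR_ge1Dx v.
have E_le : E * (1 - v) <= 1.
  have : E * (1 - v) <= E * expR (- v).
    by apply: ler_wpM2l; [exact: expR_ge0 | exact: expR_ge1Dx].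
  by rewrite /E -expRD subrr expR0.
have E_quad : E - 1 - v <= 2 * v^+2 by rewrite /v in E_le *; nra.
have : (E - 1) * q <= (E - 1) * (g - d) by apply: ler_wpM2l; lra.
have : g * (E - 1 - v) <= E - 1 - v by rewrite -[leRHS]mul1r ler_wpM2r //; lra.
rewrite /v in E_quad E_ge |- * => *; nra.
Qed.

Lemma chernoff_exponent_lower {R : realType} {q g d : R} :
  0 <= g -> g <= 1 -> 0 < d -> d <= 1/2 -> d <= q - g ->
  (expR (- (d/4)) - 1) * q + (d/4) * g <= - (d^+2/8).
Proof.
move=> g0 g1 d0 d12 dqg.
set v := d/4; set F := expR (- v).
have v0 : 0 < v by rewrite /v divr_gt0.
have F_ge : 1 - v <= F := expR_ge1Dx (- v).
have F_le : F * (1 + v) <= 1.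
  have : F * (1 + v) <= F * expR v.
    by apply: ler_wpM2l; [exact: expR_ge0 | exact: expR_ge1Dx].
  by rewrite /F -expRD addNr expR0.
have F_quad : F - 1 + v <= v^+2 by nra.
have : (F - 1) * q <= (F - 1) * (g + d) by apply: ler_wnM2l; nra.
have : g * (F - 1 + v) <= F - 1 + v by rewrite -[leRHS]mul1r ler_wpM2r //; nra.
rewrite /v in F_quad F_ge |- * => *; nra.
Qed.

(* Intended use: [Q] bounds P(X = g * M) for a count [X] of mean [S] over a
   block of length [M], and [pb * M] is within 1 of [S]. *)
Lemma chernoff_deviation_bound {R : realType} {Q S g d pb M : R} :
  0 < d -> d <= 1/2 -> 0 <= g <= 1 -> 0 <= S -> 1 < d * M ->
  2 * d <= `|g - pb| -> S <= pb * M <= S + 1 ->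
  (forall u, Q <= expR (- (u * (g * M)) + (expR u - 1) * S)) ->
  Q < expR (- (d^+2 / 16 * M)).
Proof.
move=> d0 d12 /andP[g0 g1] S0 dM gpb /andP[SpbM pbMS] QS.
have M0 : 0 < M by rewrite -(pmulr_rgt0 M d0); lra.
set q := S / M.
have Sq : S = q * M by rewrite /q divfK // gt_eqF.
have q0 : 0 <= q by rewrite /q divr_ge0 // ltW.
have M_inv : M^-1 < d by rewrite -(ltr_pM2r M0) mulVf ?gt_eqF.
apply: (@le_lt_trans _ _ (expR (- (d^+2 / 8 * M)))); last first.
  by rewrite ltr_expR ltrN2 ltr_pM2r //; have := exprn_gt0 2 d0; lra.
have [g_lt|pb_lt] : g < pb \/ pb < g.
  case: (ltgtP g pb) => [||g_pb]; [by left|by right|].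
  by move: gpb; rewrite g_pb subrr normr0; lra.
- have qg : d <= q - g.
    rewrite ltr0_norm ?subr_lt0 // in gpb.
    have : pb <= q + M^-1 by rewrite -(ler_pM2r M0) mulrDl mulVf ?gt_eqF // -Sq.
    lra.
  apply: le_trans (QS (- (d / 4))) _; rewrite ler_expR Sq.
  have := ler_wpM2l (ltW M0) (chernoff_exponent_lower g0 g1 d0 d12 qg); nra.
- have qg : d <= g - q.
    rewrite gtr0_norm ?subr_gt0 // in gpb.
    have : q <= pb by rewrite -(ler_pM2r M0) -Sq.
    lra.
  apply: le_trans (QS (d / 4)) _; rewrite ler_expR Sq.
  have := ler_wpM2l (ltW M0) (chernoff_exponent_upper q0 g1 d0 d12 qg); nra.
Qed.

Lemma integrable_sub01 {R : realType} {f : R -> R} {a b : R} :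
  {within `[0, 1], continuous f} -> 0 <= a -> b <= 1 ->
  lebesgue_measure.-integrable `[a, b] (EFin \o f).
Proof.
move=> f_cont a0 b1.
apply: integrableS (continuous_compact_integrable (@segment_compact R 0 1) f_cont) => //.
by apply: subset_itv; rewrite bnd_simp.
Qed.

Lemma Rintegral_cst_itv {R : realType} (c : R) {a b : R} : a <= b ->
  Rintegral lebesgue_measure `[a, b] (fun=> c) = c * (b - a).
Proof.
move=> ab; rewrite Rintegral_cst //= lebesgue_measure_itv /=.
case: ifPn => //; rewrite lte_fin -leNgt => ba.
have -> : b = a by apply/eqP; rewrite eq_le ab ba.
by rewrite subrr.
Qed.

Section NonincreasingIntegral.
Context {R : realType} {p : R -> R}.
Notation mu := (@lebesgue_measure R).
Hypothesis p_cont : {within `[0, 1], continuous p}.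
Hypothesis p_noninc : forall x y, 0 <= x -> x <= y -> y <= 1 -> p y <= p x.

Lemma Rintegral_itv_split {a c b : R} : 0 <= a -> a <= c -> c <= b -> b <= 1 ->
  Rintegral mu `[a, b] p = Rintegral mu `[a, c] p + Rintegral mu `[c, b] p.
Proof.
move=> a0 ac cb b1.
have := @Rintegral_itvB R p (BLeft a) (BRight b) c (integrable_sub01 p_cont a0 b1).
rewrite !bnd_simp => /(_ ac cb) split_ab.
rewrite -(@Rintegral_itv_obnd_cbnd R c (BRight b) p); first by rewrite -split_ab; ring.
apply: integrableS (integrable_sub01 p_cont a0 b1) => //.
by apply: subset_itv; rewrite bnd_simp.
Qed.

Lemma Rintegral_noninc_bounds {c e : R} : 0 <= c -> c <= e -> e <= 1 ->
  p e * (e - c) <= Rintegral mu `[c, e] p <= p c * (e - c).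
Proof.
move=> c0 ce e1.
rewrite -(Rintegral_cst_itv (p e) ce) -(Rintegral_cst_itv (p c) ce).
have cst_cont (k : R) : {within `[0, 1], continuous (fun _ : R => k)}.
  by apply: continuous_subspaceT => x; exact: cst_continuous.
apply/andP; split; apply: le_Rintegral => //.
all: try (by apply: integrable_sub01).
- by move=> x; rewrite /= in_itv /= => /andP[cx xe]; apply: p_noninc => //; exact: le_trans cx.
- by move=> x; rewrite /= in_itv /= => /andP[cx xe]; apply: p_noninc => //; exact: le_trans e1.
Qed.

Lemma Riemann_sums_noninc_bounds {a h : R} {k : nat} :
  0 <= a -> 0 < h -> a + k%:R * h <= 1 ->
  \sum_(l < k) p (a + l.+1%:R * h) * h <= Rintegral mu `[a, a + k%:R * h] p
   <= \sum_(l < k) p (a + l%:R * h) * h.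
Proof.
move=> a0 h0; elim: k => [|k IH] ak1.
  by rewrite !big_ord0 mul0r addr0 set_itv1 Rintegral_set1 lexx.
have a_le : a <= a + k%:R * h by rewrite lerDl mulr_ge0 // ltW.
have ak_le : a + k%:R * h <= a + k.+1%:R * h by rewrite lerD2l ler_wpM2r ?ler_nat // ltW.
rewrite (Rintegral_itv_split a0 a_le ak_le ak1) !big_ord_recr /=.
have /andP[IHl IHu] := IH (le_trans ak_le ak1).
have := Rintegral_noninc_bounds (le_trans a0 a_le) ak_le ak1.
have -> : a + k.+1%:R * h - (a + k%:R * h) = h by rewrite -addn1 natrD; ring.
by move=> /andP[stepl stepu]; rewrite !lerD.
Qed.

End NonincreasingIntegral.

Lemma sum_ord_range {R : realType} (f : nat -> R) (n a m : nat) :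
  (a + m <= n)%N ->
  \sum_(j < n | (a <= j < a + m)%N) f j = \sum_(l < m) f (l + a)%N.
Proof.
move=> amn; rewrite -(big_mkord (fun j => a <= j < a + m)%N f).
have -> : \sum_(0 <= j < n | (a <= j < a + m)%N) f j = \sum_(a <= j < a + m) f j.
  rewrite (big_nat_widen _ _ _ _ _ amn) (big_nat_widenl _ _ _ _ _ (leq0n a)).
  by apply: eq_bigl => j; rewrite andbC.
by rewrite -{1}(add0n a) big_addn addKn big_mkord.
Qed.

Definition block_mean {R : realType} (p : R -> R) (n r : nat) (i : 'I_r) : R :=
  \sum_(j in block n r i) p (j.+1%:R / n%:R).

Lemma index_ratio01 {R : realType} {n : nat} (j : 'I_n) :
  0 <= (j.+1%:R / n%:R : R) <= 1.
Proof.
rewrite divr_ge0 ?ler0n //= ler_pdivrMr ?mul1r ?ler_nat //.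
by rewrite ltr0n (leq_ltn_trans _ (ltn_ord j)).
Qed.

Lemma Qn_le_chernoff {R : realType} {p : R -> R} {r : nat} (g : 'I_r -> R)
    (n : nat) (i : 'I_r) (u : R) :
  (forall x, 0 <= x <= 1 -> 0 <= p x <= 1) ->
  Qn p r g n <= expR (- (u * (g i * (n %/ r)%:R)) + (expR u - 1) * block_mean p n r i).
Proof.
move=> p01; apply: chernoff_card_setI => [j|A /forallP /(_ i) /eqP //].
exact/p01/index_ratio01.
Qed.

(* With [n = m * r], [block_mean] is a right Riemann sum of [p] over
   [i/r, (i+1)/r] with step [1/n] and the left one exceeds it by
   [p (i/r) - p ((i+1)/r) <= 1]; [pbar * m] is the integral times [n]. *)
Lemma block_mean_pbar_bounds {R : realType} {p : R -> R} {r m : nat} (i : 'I_r) :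
  {within `[0, 1], continuous p} ->
  (forall x, 0 <= x <= 1 -> 0 <= p x <= 1) ->
  (forall x y, 0 <= x -> x <= y -> y <= 1 -> p y <= p x) ->
  (0 < m)%N ->
  block_mean p (m * r) r i <= pbar p r i * m%:R <= block_mean p (m * r) r i + 1.
Proof.
move=> p_cont p01 p_noninc m0.
have r0 : (0 < r)%N by apply: leq_ltn_trans (ltn_ord i).
have rR : 0 < r%:R :> R by rewrite ltr0n.
have mR : 0 < m%:R :> R by rewrite ltr0n.
set n := (m * r)%N; have nR : n%:R = m%:R * r%:R :> R by rewrite natrM.
have nR0 : 0 < n%:R :> R by rewrite nR mulr_gt0.
set a := i%:R / r%:R : R; set h := n%:R^-1 : R.
have a0 : 0 <= a by rewrite divr_ge0 ?ler0n.
have h0 : 0 < h by rewrite invr_gt0.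
have amh : a + m%:R * h = i.+1%:R / r%:R.
  by rewrite /a /h nR -addn1 natrD; field; rewrite !gt_eqF.
have amh1 : a + m%:R * h <= 1 by rewrite amh ler_pdivrMr // mul1r ler_nat.
have in01 (l : nat) : (l <= m)%N -> 0 <= a + l%:R * h <= 1.
  move=> lm; rewrite addr_ge0 ?mulr_ge0 ?ler0n ?(ltW h0) //=.
  by apply: le_trans amh1; rewrite lerD2l ler_wpM2r ?ler_nat // ltW.
have mean_right : block_mean p n r i = \sum_(l < m) p (a + l.+1%:R * h).
  rewrite /block_mean /block (mulnK _ r0).
  under eq_bigl => j do rewrite inE mulSn [(m + _)%N]addnC.
  rewrite (sum_ord_range (fun j : nat => p (j.+1%:R / n%:R))); last first.
    by rewrite addnC -mulSn /n mulnC leq_mul2l ltn_ord orbT.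
  apply: eq_bigr => l _; congr p; rewrite /a /h nR -addn1 !natrD natrM.
  by field; rewrite !gt_eqF.
have telescope : \sum_(l < m) (p (a + l%:R * h) - p (a + l.+1%:R * h)) =
                 p a - p (a + m%:R * h).
  rewrite -(big_mkord xpredT (fun l => p (a + l%:R * h) - p (a + l.+1%:R * h))).
  rewrite (@telescope_sumr_eq _ _ _ (fun l => - p (a + l%:R * h))) //.
    by rewrite mul0r addr0 opprK addrC.
  by move=> l _; rewrite opprK addrC.
have left_right : \sum_(l < m) p (a + l%:R * h) =
                  \sum_(l < m) p (a + l.+1%:R * h) + (p a - p (a + m%:R * h)).
  by rewrite -telescope sumrB; ring.
have pbarE : pbar p r i * m%:R = Rintegral lebesgue_measure `[a, a + m%:R * h] p * n%:R.
  by rewrite amh /pbar nR; ring.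
have /andP[int_ge int_le] := Riemann_sums_noninc_bounds p_cont p_noninc a0 h0 amh1.
rewrite -!mulr_suml in int_ge int_le.
have mean_le := ler_wpM2r (ltW nR0) int_ge; have le_mean := ler_wpM2r (ltW nR0) int_le.
rewrite -!mulrA mulVf ?gt_eqF // !mulr1 -pbarE in mean_le le_mean.
rewrite left_right -mean_right in mean_le le_mean.
have /andP[_ pa1] := p01 _ (in01 0%N (leq0n m)); rewrite mul0r addr0 in pa1.
have /andP[pam0 _] := p01 _ (in01 m (leqnn m)).
by rewrite mean_le /=; lra.
Qed.

Lemma KLbern_xx {R : realType} (x : R) : KLbern x x = 0%E.
Proof.
rewrite /KLbern; case: eqP => [_|/eqP x0]; case: eqP => [_|/eqP x1];
  rewrite ?(negbTE x0) ?(negbTE x1) ?divff ?subr_eq0 1?eq_sym ?ln1 ?mulr0 ?adde0 //.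
all: by rewrite eq_sym.
Qed.

Lemma KLbern_sum_gt_neq {R : realType} {r : nat} {q p : 'I_r -> R} {c : R} :
  0 <= c -> (c%:E < (r%:R^-1)%:E * \sum_(i < r) KLbern (q i) (p i))%E ->
  exists i, q i != p i.
Proof.
move=> c0; case: (pickP (fun i => q i != p i)) => [i qpi _|qp]; first by exists i.
rewrite big1 ?mule0 ?lte_fin ?ltNge ?c0 // => i _.
by move/negbFE/eqP: (qp i) => ->; exact: KLbern_xx.
Qed.

Theorem lemma5 (R : realType) (p : R -> R) (r : nat) (g : 'I_r -> R) (eps : R) :
  {within `[0, 1]%classic, continuous p} ->
  (forall x, 0 <= x <= 1 -> 0 <= p x <= 1) ->
  (forall x y, 0 <= x -> x <= y -> y <= 1 -> p y <= p x) ->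
  (0 < r)%N ->
  (forall i, 0 <= g i <= 1) ->
  0 < eps ->
  ((r%:R^-1)%:E * (\sum_(i < r) KLbern (g i) (pbar p r i)) > eps%:E)%E ->
  exists (n0 : nat) (b : R), 0 < b /\
    forall n : nat, (n0 < n)%N -> (r %| n)%N ->
      (forall i, exists k : nat, g i * (n %/ r)%:R = k%:R) ->
      Qn p r g n < expR (- (b * n%:R)).
Proof.
move=> p_cont p01 p_noninc r0 g01 eps0 KL_gt.
have [i g_neq_pbar] := KLbern_sum_gt_neq (ltW eps0) KL_gt.
set d := Num.min (`|g i - pbar p r i| / 2) (1/2).
have d0 : 0 < d by rewrite lt_min divr_gt0 ?normr_gt0 ?subr_eq0 //=; lra.
have d12 : d <= 1/2 by rewrite ge_min lexx orbT.
have dev : 2 * d <= `|g i - pbar p r i|.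
  have : d <= `|g i - pbar p r i| / 2 by rewrite ge_min lexx.
  lra.
set N := (Num.trunc d^-1).+1.
have d_inv_lt : d^-1 < N%:R by apply: truncnS_gt.
exists (r * N)%N, (d^+2 / (16 * r%:R)); split.
  by rewrite divr_gt0 ?exprn_gt0 // mulr_gt0 ?ltr0n.
move=> n + /dvdnP[m nE] _; rewrite {n}nE mulnC ltn_pmul2r // => Nm.
have m0 : (0 < m)%N := leq_ltn_trans (leq0n N) Nm.
have dm : 1 < d * m%:R.
  have : d^-1 < m%:R by apply: lt_le_trans d_inv_lt _; rewrite ler_nat ltnW.
  by rewrite -(ltr_pM2l d0) mulfV ?gt_eqF.
have -> : d^+2 / (16 * r%:R) * (m * r)%:R = d^+2 / 16 * m%:R.
  by rewrite natrM; field; rewrite pnatr_eq0 -lt0n r0.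
have mean_ge0 : 0 <= block_mean p (m * r) r i.
  by apply: sumr_ge0 => j _; have /andP[] := p01 _ (index_ratio01 j).
have bounds := block_mean_pbar_bounds i p_cont p01 p_noninc m0.
apply: (chernoff_deviation_bound d0 d12 (g01 i) mean_ge0 dm dev bounds) => u.
by have := Qn_le_chernoff g (m * r) i u p01; rewrite mulnK.
Qed.
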